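(* Let $k_0>0$, $L>0$, $\mathbf n\in C^1([0,L],\mathbb{S}^2)$ and $\alpha\in C^1[0,L]$. Define $\mathbf e(t)=R_{\mathbf n(t),\alpha(t)}\mathbf e_3$ for $t\in[0,L]$, where $\mathbf e_3=(0,0,1)^\top$. Let $\mathbf y\in\mathbb{R}^3$ with $\|\mathbf y\|<\sqrt2\,k_0$, and let $t\in[0,L]$. Then there exist $k_1,k_2$ with $(k_1,k_2,t)\in\mathcal U$ and $T_+(k_1,k_2,t)=\mathbf y$ if and only if $$\mathbf y\cdot\mathbf e(t)=-\frac{\|\mathbf y\|^2}{2k_0}.$$ Moreover, $\operatorname{Card}(T_+^{-1}(\mathbf y))$ equals the number of solutions $t\in[0,L]$ of this equation.
   Context: $\mathbb{S}^2$ is the unit sphere in $\mathbb{R}^3$. For a unit vector $\mathbf n$ and angle $\alpha$, $R_{\mathbf n,\alpha}\mathbf y=(1-\cos\alpha)(\mathbf n\cdot\mathbf y)\mathbf n+\cos\alpha\,\mathbf y-\sin\alpha\,(\mathbf n\times\mathbf y)$. $\kappa=\kappa(k_1,k_2)=\sqrt{k_0^2-k_1^2-k_2^2}$. $\mathcal U=\{(k_1,k_2,t)\in\mathbb{R}^3:k_1^2+k_2^2<k_0^2,\ 0\le t\le L\}$, $T_+:\mathcal U\to\mathbb{R}^3$, $T_+(k_1,k_2,t)=R_{\mathbf n(t),\alpha(t)}(k_1,k_2,\kappa-k_0)^\top$, and $\operatorname{Card}(T_+^{-1}(\mathbf y))$ is the number of points of $\mathcal U$ mapped by $T_+$ to $\mathbf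 y$. *)

From Stdlib Require Import Reals Lra.
Open Scope R_scope.

Definition vec3 : Type := (R * R * R)%type.
Definition v3 (x y z : R) : vec3 := (x, y, z).
Definition vx (v : vec3) : R := fst (fst v).
Definition vy (v : vec3) : R := snd (fst v).
Definition vz (v : vec3) : R := snd v.

Definition dot (u v : vec3) : R := vx u * vx v + vy u * vy v + vz u * vz v.
Definition vnorm (u : vec3) : R := sqrt (dot u u).
Definition cross (u v : vec3) : vec3 :=
  v3 (vy u * vz v - vz u * vy v) (vz u * vx v - vx u * vz v) (vx u * vy v - vy u * vx v).
Definition vadd (u v : vec3) : vec3 := v3 (vx u + vx v) (vy u + vy v) (vz u + vz v).
Definition vscale (a : R) (u : vec3) : vec3 := v3 (a * vx u) (a * vy u) (a * vz u).

Definition e3 : vec3 := v3 0 0 1.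

Definition rot (n : vec3) (a : R) (y : vec3) : vec3 :=
  vadd (vadd (vscale ((1 - cos a) * dot n y) n) (vscale (cos a) y))
       (vscale (- sin a) (cross n y)).

Definition kappa (k0 k1 k2 : R) : R := sqrt (k0 ^ 2 - k1 ^ 2 - k2 ^ 2).

Definition inU (k0 L k1 k2 t : R) : Prop := k1 ^ 2 + k2 ^ 2 < k0 ^ 2 /\ 0 <= t <= L.

Definition Tplus (n : R -> vec3) (alpha : R -> R) (k0 k1 k2 t : R) : vec3 :=
  rot (n t) (alpha t) (v3 k1 k2 (kappa k0 k1 k2 - k0)).

Definition evec (n : R -> vec3) (alpha : R -> R) (t : R) : vec3 :=
  rot (n t) (alpha t) e3.

(* C^1 on the closed interval [a,b]: derivative (one-sided at the endpoints,
   i.e. the difference quotient limit taken within [a,b]) exists at every point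
   of [a,b] and is continuous on [a,b]. *)
Definition cont_on (f : R -> R) (a b : R) : Prop :=
  forall t, a <= t <= b -> forall eps, 0 < eps -> exists delta, 0 < delta /\
    forall s, a <= s <= b -> Rabs (s - t) < delta -> Rabs (f s - f t) < eps.

Definition has_deriv_on (f f' : R -> R) (a b : R) : Prop :=
  forall t, a <= t <= b -> forall eps, 0 < eps -> exists delta, 0 < delta /\
    forall s, a <= s <= b -> s <> t -> Rabs (s - t) < delta ->
      Rabs ((f s - f t) / (s - t) - f' t) < eps.

Definition C1_on (f : R -> R) (a b : R) : Prop :=
  exists f', has_deriv_on f f' a b /\ cont_on f' a b.

Definition C1_sphere (n : R -> vec3) (L : R) : Prop :=
  C1_on (fun t => vx (n t)) 0 L /\ C1_on (fun t => vy (n t)) 0 L /\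
  C1_on (fun t => vz (n t)) 0 L /\
  (forall t, 0 <= t <= L -> vnorm (n t) = 1).

(* Equality of cardinalities of two (possibly infinite) sets:
   existence of a bijection between the corresponding subtypes. *)
Definition same_card {A B : Type} (P : A -> Prop) (Q : B -> Prop) : Prop :=
  exists (f : {x : A | P x} -> {y : B | Q y}) (g : {y : B | Q y} -> {x : A | P x}),
    (forall x, g (f x) = x) /\ (forall y, f (g y) = y).

Definition Tplus_preimage (n : R -> vec3) (alpha : R -> R) (k0 L : R) (y : vec3)
  (p : vec3) : Prop :=
  inU k0 L (vx p) (vy p) (vz p) /\ Tplus n alpha k0 (vx p) (vy p) (vz p) = y.

From Stdlib Require Import Reals Lra ProofIrrelevance.
Open Scope R_scope.

(** [R_{n,a}] is an isometry with inverse [R_{n,-a}], so [T_+(k1, k2, t) = y]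
    iff [w := R_{n(t),-a(t)} y] is the point [(k1, k2, kappa - k0)] of the upper
    hemisphere of the sphere [|w + k0 e3| = k0].  That sphere is the quadric
    [w . e3 = - |w|^2 / (2 k0)], which rotates into the stated equation, and
    [|w| < sqrt 2 k0] puts [w] on the upper hemisphere, where [(k1, k2) = (w1, w2)]
    is forced.  Hence each slice [t = const] of the preimage has at most one point,
    and [(k1, k2, t) |-> t] is the bijection. *)

Lemma same_card_of_inverse_on {A B : Type} (P : A -> Prop) (Q : B -> Prop)
  (f : A -> B) (g : B -> A) :
  (forall x, P x -> Q (f x)) -> (forall y, Q y -> P (g y)) ->
  (forall x, P x -> g (f x) = x) -> (forall y, Q y -> f (g y) = y) ->
  same_card P Q.
Proof.
intros HPQ HQP Hgf Hfg.
exists (fun x => exist Q (f (proj1_sig x)) (HPQ _ (proj2_sig x))).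
exists (fun y => exist P (g (proj1_sig y)) (HQP _ (proj2_sig y))).
split; [intros [x Hx] | intros [y Hy]]; apply subset_eq_compat; simpl; auto.
Qed.

Lemma eq_of_lin_comb (l r e1 e2 a1 a2 : R) :
  e1 = 0 -> e2 = 0 -> l - r = a1 * e1 + a2 * e2 -> l = r.
Proof. intros -> ->; lra. Qed.

Lemma rot_dot (n u w : vec3) (a : R) : dot n n = 1 ->
  dot (rot n a u) (rot n a w) = dot u w.
Proof.
intros Hn.
assert (Hn0 : dot n n - 1 = 0) by lra.
assert (Hsc : sin a ^ 2 + cos a ^ 2 - 1 = 0)
  by (pose proof (sin2_cos2 a); unfold Rsqr in *; lra).
(* Certificate for the identity modulo [|n|^2 = 1] and [sin^2 + cos^2 = 1]. *)
apply (eq_of_lin_comb _ _ _ _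
  ((1 - cos a) ^ 2 * dot n u * dot n w + sin a ^ 2 * dot u w)
  (dot u w - dot n u * dot n w) Hn0 Hsc).
destruct n as [[n1 n2] n3], u as [[u1 u2] u3], w as [[w1 w2] w3].
unfold rot, vadd, vscale, cross, dot, v3, vx, vy, vz; simpl.
ring.
Qed.

Lemma rot_adjoint (n u w : vec3) (a : R) :
  dot (rot n (- a) u) w = dot u (rot n a w).
Proof.
destruct n as [[n1 n2] n3], u as [[u1 u2] u3], w as [[w1 w2] w3].
unfold rot, vadd, vscale, cross, dot, v3, vx, vy, vz; simpl.
rewrite cos_neg, sin_neg; ring.
Qed.

Lemma vec3_eq_of_dot (u v : vec3) :
  dot u u = dot u v -> dot v v = dot u v -> u = v.
Proof.
destruct u as [[u1 u2] u3], v as [[v1 v2] v3].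
unfold dot, vx, vy, vz; simpl; intros Hu Hv.
assert (Hsum : (u1 - v1)² + (u2 - v2)² + (u3 - v3)² = 0) by (unfold Rsqr; lra).
pose proof (Rle_0_sqr (u1 - v1)); pose proof (Rle_0_sqr (u2 - v2)).
pose proof (Rle_0_sqr (u3 - v3)).
f_equal; [f_equal|]; apply Rminus_diag_uniq, Rsqr_0_uniq; lra.
Qed.

Lemma rotK (n u : vec3) (a : R) : dot n n = 1 -> rot n (- a) (rot n a u) = u.
Proof.
intros Hn.
assert (Hvv : dot (rot n (- a) (rot n a u)) (rot n (- a) (rot n a u)) = dot u u)
  by now rewrite !rot_dot.
assert (Hvu : dot (rot n (- a) (rot n a u)) u = dot u u)
  by now rewrite rot_adjoint, rot_dot.
apply vec3_eq_of_dot; congruence.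
Qed.

Lemma rotKV (n u : vec3) (a : R) : dot n n = 1 -> rot n a (rot n (- a) u) = u.
Proof. intros Hn; rewrite <- (Ropp_involutive a) at 1; exact (rotK n u (- a) Hn). Qed.

Lemma vnorm_sq (v : vec3) : vnorm v ^ 2 = dot v v.
Proof.
apply pow2_sqrt.
destruct v as [[v1 v2] v3]; unfold dot, vx, vy, vz; simpl; nra.
Qed.

Lemma dot_lt_of_vnorm_lt (v : vec3) (c : R) : vnorm v < c -> dot v v < c ^ 2.
Proof.
intros Hv; rewrite <- vnorm_sq.
assert (0 <= vnorm v) by apply sqrt_pos.
nra.
Qed.

Definition ewald_point (k0 k1 k2 : R) : vec3 := v3 k1 k2 (kappa k0 k1 k2 - k0).

Lemma ewald_point_dot_e3 (k0 k1 k2 : R) : 0 < k0 -> k1 ^ 2 + k2 ^ 2 < k0 ^ 2 ->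
  let v := ewald_point k0 k1 k2 in dot v e3 = - dot v v / (2 * k0).
Proof.
intros Hk0 Hk v.
assert (Hkappa : kappa k0 k1 k2 ^ 2 = k0 ^ 2 - k1 ^ 2 - k2 ^ 2)
  by (apply pow2_sqrt; lra).
unfold v, ewald_point, dot, e3, v3, vx, vy, vz; simpl.
set (kap := kappa k0 k1 k2) in *.
replace (k1 * k1 + k2 * k2 + (kap - k0) * (kap - k0)) with (2 * k0 * (k0 - kap))
  by lra.
field; lra.
Qed.

(* The equation forces [(k0 + w3)^2 = k0^2 - w1^2 - w2^2], and [|w|^2 < 2 k0^2]
   makes [k0 + w3] positive, so that [kappa] selects exactly this root. *)
Lemma ewald_point_of_dot_e3 (k0 : R) (w : vec3) : 0 < k0 -> dot w w < 2 * k0 ^ 2 ->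
  dot w e3 = - dot w w / (2 * k0) ->
  vx w ^ 2 + vy w ^ 2 < k0 ^ 2 /\ ewald_point k0 (vx w) (vy w) = w.
Proof.
destruct w as [[w1 w2] w3].
unfold ewald_point, kappa, dot, e3, v3, vx, vy, vz; cbn [fst snd]; intros Hk0 Hw He.
assert (Hw3 : 2 * k0 * w3 = - (w1 * w1 + w2 * w2 + w3 * w3)).
{ replace w3 with (w1 * 0 + w2 * 0 + w3 * 1) at 1 by ring.
  rewrite He; field; lra. }
assert (Hpos : 0 < k0 + w3) by nra.
assert (Hsq : k0 ^ 2 - w1 ^ 2 - w2 ^ 2 = (k0 + w3) ^ 2) by nra.
split; [nra |].
rewrite Hsq, sqrt_pow2 by lra.
f_equal; ring.
Qed.

Section Fibre.

Variables (k0 : R) (N : vec3) (a : R) (y : vec3).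
Hypotheses (k0_pos : 0 < k0) (N_unit : dot N N = 1) (y_small : vnorm y < sqrt 2 * k0).

Lemma rot_ewald_point_eq_iff (k1 k2 : R) :
  (k1 ^ 2 + k2 ^ 2 < k0 ^ 2 /\ rot N a (ewald_point k0 k1 k2) = y) <->
  (dot y (rot N a e3) = - (vnorm y ^ 2) / (2 * k0) /\
   k1 = vx (rot N (- a) y) /\ k2 = vy (rot N (- a) y)).
Proof.
split.
- intros [Hk <-].
  rewrite rotK, vnorm_sq, !rot_dot by exact N_unit.
  split; [exact (ewald_point_dot_e3 k0 k1 k2 k0_pos Hk) | split; reflexivity].
- intros [He [-> ->]].
  set (w := rot N (- a) y).
  assert (Hy : rot N a w = y) by exact (rotKV N y a N_unit).
  assert (Hw : dot w w < 2 * k0 ^ 2).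
  { rewrite <- (rot_dot N w w a N_unit), Hy, <- (pow2_sqrt 2), <- Rpow_mult_distr by lra.
    now apply dot_lt_of_vnorm_lt. }
  rewrite <- Hy, vnorm_sq, !rot_dot in He by exact N_unit.
  destruct (ewald_point_of_dot_e3 k0 w k0_pos Hw He) as [Hk Hw'].
  split; [exact Hk | now rewrite Hw'].
Qed.

End Fibre.

Theorem proposition4p6 (k0 L : R) (n : R -> vec3) (alpha : R -> R) (y : vec3) :
  0 < k0 -> 0 < L ->
  C1_sphere n L -> C1_on alpha 0 L ->
  vnorm y < sqrt 2 * k0 ->
  (forall t, 0 <= t <= L ->
     ((exists k1 k2, inU k0 L k1 k2 t /\ Tplus n alpha k0 k1 k2 t = y) <->
      dot y (evec n alpha t) = - (vnorm y ^ 2) / (2 * k0))) /\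
  same_card (Tplus_preimage n alpha k0 L y)
            (fun t => 0 <= t <= L /\ dot y (evec n alpha t) = - (vnorm y ^ 2) / (2 * k0)).
Proof.
intros Hk0 _ [_ [_ [_ Hn]]] _ Hy.
set (w t := rot (n t) (- alpha t) y).
assert (Hfibre : forall k1 k2 t, 0 <= t <= L ->
  (inU k0 L k1 k2 t /\ Tplus n alpha k0 k1 k2 t = y) <->
  (dot y (evec n alpha t) = - (vnorm y ^ 2) / (2 * k0) /\ k1 = vx (w t) /\ k2 = vy (w t))).
{ intros k1 k2 t Ht.
  assert (Hunit : dot (n t) (n t) = 1) by (rewrite <- vnorm_sq, Hn by exact Ht; ring).
  pose proof (rot_ewald_point_eq_iff k0 (n t) (alpha t) y Hk0 Hunit Hy k1 k2).
  unfold inU; tauto. }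
split.
- intros t Ht; split.
  + intros [k1 [k2 Hk]]; apply (Hfibre k1 k2 t Ht), Hk.
  + intros He; exists (vx (w t)), (vy (w t)); apply (Hfibre _ _ t Ht); auto.
- apply same_card_of_inverse_on with vz (fun t => v3 (vx (w t)) (vy (w t)) t).
  + intros [[k1 k2] t] Hp; assert (Ht : 0 <= t <= L) by apply Hp.
    split; [exact Ht | apply (Hfibre k1 k2 t Ht), Hp].
  + intros t [Ht He]; apply (Hfibre _ _ t Ht); auto.
  + intros [[k1 k2] t] Hp; assert (Ht : 0 <= t <= L) by apply Hp.
    apply (Hfibre k1 k2 t Ht) in Hp as [_ [-> ->]]; reflexivity.
  + reflexivity.
Qed.
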